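(* Let $K$ be a finite simplicial complex with stratification $\mathcal S$ and assignment map $s$, let $(f,s)$ be a discrete stratified Morse function on $K$, and let $V$ be the discrete gradient vector field $V=\bigcup_i V_i$ (defined below). Extend the partial order on $\mathcal S$ (given by $S_i<S_j$ iff $S_i\subseteq\overline{S_j}$) to a linear order and write the strata as $S_1<S_2<\cdots<S_n$. Then there is a discrete Morse function $g:K\to\mathbb R$ such that (1) the gradient vector field of $g$ is exactly $V$, and (2) there are real numbers $a_1<a_2<\cdots<a_n$ with $g^{-1}(-\infty,a_i]=\bigcup_{j\le i}S_j$ (as sets of simplices) for each $1\le i\le n$.
   Context: A finite simplicial complex $K$ is regarded as a finite set of open simplices closed under taking faces; closures are taken in $|K|$. A stratification of $K$ is a finite collection $\mathcal S=\{S_i\}$ of pairwise disjoint, locally closed subsets of $|K|$, each a union of open simplices, covering $|K|$, with $S_i\cap\overline{S_j}\neq\emptyset$ iff $S_i\subseteq\overline{S_j}$; $s:K\to\mathcal S$ sends a simplex to the stratum containing it. For $f:K\to\mathbb R$ and a $p$-simplex $\alpha$: $U(\alpha)=\{\beta^{(p+1)}>\alpha: f(\beta)\le f(\alpha)\}$, $L(\alpha)=\{\gamma^{(p-1)}<\alpha: f(\gamma)\ge f(\alpha)\}$, and $U_s,L_s$ are the subsets consisting of simplices in the same stratum as $\alpha$. $f$ is a discrete Morse function if $|U(\alpha)|\le1,|L(\alpha)|\le1$ for all $\alpha$; $(f,s)$ is a discrete stratified Morse function if $|U_s(\alpha)|\le1$, $|L_s(\alpha)|\le1$ and not both are nonempty,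 for all $\alpha$. $V_i$ is the set of pairs $\{\alpha^{(p)}<\beta^{(p+1)}\}$ with $\alpha,\beta\subseteq S_i$ and $f(\beta)\le f(\alpha)$, and $V=\bigcup_iV_i$. The gradient vector field of a discrete Morse function $g$ is the set of pairs $\{\alpha^{(p)}<\beta^{(p+1)}\}$ with $g(\beta)\le g(\alpha)$. *)

From mathcomp Require Import all_boot.
From Stdlib Require Import Reals.

Set Implicit Arguments.
Unset Strict Implicit.
Unset Printing Implicit Defensive.

Section Defs.
Variable V : finType.

(* A finite (abstract) simplicial complex on the vertex set V: a finite set of
   nonempty simplices closed under taking nonempty faces.  A p-simplex is a
   simplex with p+1 vertices. *)
Definition simplicial_complex (K : {set {set V}}) : Prop :=
  (forall sigma, sigma \in K -> sigma != set0) /\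
  (forall sigma tau : {set V}, sigma \in K -> tau \subset sigma -> tau != set0 -> tau \in K).

Definition facet (alpha beta : {set V}) : bool :=
  (alpha \subset beta) && (#|beta| == #|alpha|.+1).

Definition in_stratum n (K : {set {set V}}) (s : {set V} -> 'I_n) (i : 'I_n)
  (sigma : {set V}) : Prop := sigma \in K /\ s sigma = i.

(* Closure in |K| of the stratum S_j (a union of open simplices): the set of
   all faces of simplices of S_j. *)
Definition in_closure n (K : {set {set V}}) (s : {set V} -> 'I_n) (j : 'I_n)
  (tau : {set V}) : Prop :=
  tau \in K /\ exists sigma, in_stratum K s j sigma /\ tau \subset sigma.

(* s : K -> 'I_n describes a stratification {S_0,...,S_{n-1}} of K
   (S_i = s^{-1}(i)): the strata are pairwise disjoint and cover K by
   construction; each S_i is locally closed (combinatorially: convex in the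
   face poset); and the frontier condition holds:
   S_i ∩ cl(S_j) ≠ ∅  <->  S_i ⊆ cl(S_j).  (With i = j the frontier condition
   forces every stratum to be nonempty.) *)
Definition stratification n (K : {set {set V}}) (s : {set V} -> 'I_n) : Prop :=
  (forall (i : 'I_n) (alpha beta gamma : {set V}),
      in_stratum K s i alpha -> in_stratum K s i gamma -> beta \in K ->
      alpha \subset beta -> beta \subset gamma -> in_stratum K s i beta) /\
  (forall i j : 'I_n,
      (exists sigma, in_stratum K s i sigma /\ in_closure K s j sigma) <->
      (forall sigma, in_stratum K s i sigma -> in_closure K s j sigma)).

(* The indexing 'I_n of the strata is a linear extension of the partial order
   S_i < S_j iff S_i ⊆ cl(S_j) (i ≠ j). *)
Definition linear_extension n (K : {set {set V}}) (s : {set V} -> 'I_n) : Prop :=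
  forall i j : 'I_n, i != j ->
    (forall sigma, in_stratum K s i sigma -> in_closure K s j sigma) ->
    (i < j)%N.

Definition inU (K : {set {set V}}) (f : {set V} -> R) (alpha beta : {set V}) : Prop :=
  beta \in K /\ facet alpha beta /\ Rle (f beta) (f alpha).
Definition inL (K : {set {set V}}) (f : {set V} -> R) (alpha gamma : {set V}) : Prop :=
  gamma \in K /\ facet gamma alpha /\ Rge (f gamma) (f alpha).

Definition at_most_one (P : {set V} -> Prop) : Prop :=
  forall x y, P x -> P y -> x = y.

Definition discrete_Morse (K : {set {set V}}) (f : {set V} -> R) : Prop :=
  forall alpha, alpha \in K ->
    at_most_one (inU K f alpha) /\ at_most_one (inL K f alpha).

Definition discrete_stratified_Morse n (K : {set {set V}}) (f : {set V} -> R)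
  (s : {set V} -> 'I_n) : Prop :=
  forall alpha, alpha \in K ->
    let Us := fun beta => inU K f alpha beta /\ s beta = s alpha in
    let Ls := fun gamma => inL K f alpha gamma /\ s gamma = s alpha in
    at_most_one Us /\ at_most_one Ls /\
    ~ ((exists beta, Us beta) /\ (exists gamma, Ls gamma)).

Definition strat_gradient n (K : {set {set V}}) (f : {set V} -> R)
  (s : {set V} -> 'I_n) (alpha beta : {set V}) : Prop :=
  alpha \in K /\ beta \in K /\ facet alpha beta /\ s alpha = s beta /\
  Rle (f beta) (f alpha).

Definition gradient (K : {set {set V}}) (g : {set V} -> R)
  (alpha beta : {set V}) : Prop :=
  alpha \in K /\ beta \in K /\ facet alpha beta /\ Rle (g beta) (g alpha).

End Defs.

(* Strata are monotone along faces (the indexing extends the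
   closure order), so adding to f a sufficiently large multiple of the stratum
   index yields g.  Pairs of faces in a common stratum keep their f-order,
   while a face in a lower stratum than its coface now has strictly smaller
   value; hence the gradient of g is exactly V, g is Morse because f is
   stratified Morse, and the sublevel sets of g at the levels between
   consecutive shifts are the unions of the first strata. *)
From mathcomp Require Import all_boot.
From Stdlib Require Import Reals Lra.

Set Implicit Arguments.
Unset Strict Implicit.
Unset Printing Implicit Defensive.

Lemma exists_bound_on_finset (T : finType) (f : T -> R) (A : {set T}) :
  exists M, (0 <= M)%R /\ forall x, x \in A -> (- M <= f x <= M)%R.
Proof.
suff [M [M0 HM]] : exists M, (0 <= M)%R /\ forall x, x \in enum A -> (- M <= f x <= M)%R.
  by exists M; split=> // x xA; apply: HM; rewrite mem_enum.
elim: (enum A) => [|y l [M [M0 HM]]]; first by exists 0%R; split=> [|x]; [lra|].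
exists (Rabs (f y) + M)%R; split; first by have := Rabs_pos (f y); lra.
move=> x; rewrite inE => /orP [/eqP -> | xl]; first by split_Rabs; lra.
by have := HM x xl; have := Rabs_pos (f y); lra.
Qed.

Section LevelShift.

Variables (V : finType) (K : {set {set V}}) (n : nat).
Variables (s : {set V} -> 'I_n) (f : {set V} -> R) (M : R).
Hypothesis M_ge0 : (0 <= M)%R.
Hypothesis f_bounded : forall x, x \in K -> (- M <= f x <= M)%R.

(* Consecutive strata are [2M + 1] apart, more than the total spread of f. *)
Definition level_shift (x : {set V}) : R := (f x + (2 * M + 1) * INR (s x))%R.

Definition level_bound (i : nat) : R := (M + (2 * M + 1) * INR i)%R.

Lemma level_bound_lt i j : (i < j)%N -> (level_bound i < level_bound j)%R.
Proof.
move=> /ltP /lt_INR lt_ij; rewrite /level_bound.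
by have := Rmult_lt_compat_l (2 * M + 1) _ _ ltac:(lra) lt_ij; lra.
Qed.

Lemma level_shift_le_bound x (i : nat) :
  x \in K -> (level_shift x <= level_bound i)%R <-> (s x <= i)%N.
Proof.
move=> xK; have := f_bounded xK; rewrite /level_shift /level_bound.
split=> [le_g|/leP /le_INR le_si].
- rewrite leqNgt; apply/negP => /ltP /le_INR; rewrite S_INR => lt_is.
  by have := Rmult_le_compat_l (2 * M + 1) _ _ ltac:(lra) lt_is; lra.
- by have := Rmult_le_compat_l (2 * M + 1) _ _ ltac:(lra) le_si; lra.
Qed.

Lemma stratum_le_of_level_shift_le x y :
  x \in K -> y \in K -> (level_shift y <= level_shift x)%R -> (s y <= s x)%N.
Proof.
move=> xK yK le_yx; apply/(level_shift_le_bound _ yK).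
by have := proj2 (level_shift_le_bound (s x) xK) (leqnn _); lra.
Qed.

End LevelShift.

Section Stratified.

Variables (V : finType) (K : {set {set V}}) (n : nat) (s : {set V} -> 'I_n).
Hypothesis s_strat : stratification K s.
Hypothesis s_linear : linear_extension K s.

Lemma stratum_le_subset alpha beta :
  alpha \in K -> beta \in K -> alpha \subset beta -> (s alpha <= s beta)%N.
Proof.
move=> aK bK sub_ab; case: (eqVneq (s alpha) (s beta)) => [-> //|ne].
apply/ltnW/(s_linear ne)/(proj1 (proj2 s_strat (s alpha) (s beta))).
by exists alpha; do !split=> //; exists beta.
Qed.

Lemma gradient_level_shift (f : {set V} -> R) M :
  (0 <= M)%R -> (forall x, x \in K -> (- M <= f x <= M)%R) ->
  forall alpha beta, gradient K (level_shift s f M) alpha beta <-> strat_gradient K f s alpha beta.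
Proof.
move=> M0 f_bounded alpha beta; rewrite /level_shift; split.
- move=> [aK [bK [fab le_g]]].
  have s_ab : s alpha = s beta.
    apply/val_inj/eqP; rewrite eqn_leq.
    rewrite stratum_le_subset //; last by case/andP: fab.
    exact: (stratum_le_of_level_shift_le M0 f_bounded).
  by do !split=> //; move: le_g; rewrite s_ab; lra.
- by move=> [aK [bK [fab [s_ab le_f]]]]; do !split=> //; rewrite s_ab; lra.
Qed.

End Stratified.

Lemma discrete_Morse_of_stratified_gradient (V : finType) (K : {set {set V}})
    (n : nat) (s : {set V} -> 'I_n) (f g : {set V} -> R) :
  discrete_stratified_Morse K f s ->
  (forall alpha beta, gradient K g alpha beta <-> strat_gradient K f s alpha beta) ->
  discrete_Morse K g.
Proof.
move=> f_Morse grad_g alpha aK; have [HU [HL _]] := f_Morse alpha aK; split.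
- move=> x y [xK [fx gx]] [yK [fy gy]].
  have [_ [_ [_ [sx lx]]]] := proj1 (grad_g alpha x) (conj aK (conj xK (conj fx gx))).
  have [_ [_ [_ [sy ly]]]] := proj1 (grad_g alpha y) (conj aK (conj yK (conj fy gy))).
  by apply: HU; do !split.
- move=> x y [xK [fx gx]] [yK [fy gy]].
  have [_ [_ [_ [sx lx]]]] :=
    proj1 (grad_g x alpha) (conj xK (conj aK (conj fx (Rge_le _ _ gx)))).
  have [_ [_ [_ [sy ly]]]] :=
    proj1 (grad_g y alpha) (conj yK (conj aK (conj fy (Rge_le _ _ gy)))).
  by apply: HL; do !split=> //; exact: Rle_ge.
Qed.

Theorem mainTheorem5 (V : finType) (K : {set {set V}}) (n : nat)
    (s : {set V} -> 'I_n) (f : {set V} -> R) :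
  simplicial_complex K ->
  stratification K s ->
  linear_extension K s ->
  discrete_stratified_Morse K f s ->
  exists g : {set V} -> R,
    discrete_Morse K g /\
    (forall alpha beta, gradient K g alpha beta <-> strat_gradient K f s alpha beta) /\
    exists a : 'I_n -> R,
      (forall i j : 'I_n, (i < j)%N -> Rlt (a i) (a j)) /\
      (forall (i : 'I_n) sigma, sigma \in K ->
         (Rle (g sigma) (a i) <-> (s sigma <= i)%N)).
Proof.
move=> _ s_strat s_linear f_Morse.
have [M [M0 f_bounded]] := exists_bound_on_finset f K.
have grad_g := gradient_level_shift s_strat s_linear M0 f_bounded.
exists (level_shift s f M); split; first exact: discrete_Morse_of_stratified_gradient grad_g.
split=> //; exists (fun i : 'I_n => level_bound M i); split.
- by move=> i j; apply: level_bound_lt.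
- by move=> i sigma; apply: level_shift_le_bound.
Qed.
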